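(* Let $k\ge 1$ be an integer and let $A_k=(a_{ij})_{1\le i,j\le k}$ be the $k\times k$ matrix with entries $a_{ij}=\frac{1}{2}|i-j|$. Let $C_k(\lambda)=\det(A_k-\lambda I_k)$ be its characteristic polynomial. Then $$C_k(\lambda)=(-1)^k\lambda^k\left(1-\frac{k}{4}\sum_{j=1}^{k-1}\frac{j}{j+1}\binom{k+j}{2j+1}\lambda^{-j-1}\right).$$
   Context: $I_k$ denotes the $k\times k$ identity matrix. The identity is one of polynomials in $\lambda$ (the right-hand side is a polynomial since $j+1\le k$). *)

From HB Require Import structures.
From mathcomp Require Import all_boot all_order all_algebra.
Set Implicit Arguments. Unset Strict Implicit. Unset Printing Implicit Defensive.
Import Order.TTheory GRing.Theory Num.Theory.
Local Open Scope ring_scope.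

(* A_k with entries a_ij = |i - j| / 2 (0-based indices; |i-j| is unchanged). *)
Definition A_mat (R : numFieldType) (k : nat) : 'M[R]_k :=
  \matrix_(i < k, j < k) (`|(i%:R : R) - j%:R| / 2).

Definition C_poly (R : numFieldType) (k : nat) : {poly R} :=
  \det (map_mx polyC (A_mat R k) - ('X : {poly R})%:M).

From HB Require Import structures.
From mathcomp Require Import all_boot all_order all_algebra.
From mathcomp Require Import zify ring.
Import Order.TTheory GRing.Theory Num.Theory.
Local Open Scope ring_scope.

Set Implicit Arguments. Unset Strict Implicit. Unset Printing Implicit Defensive.

(* For k = m + 3 let D be
   the difference matrix whose first row is (e_0 + e_(k-1)) / 2 and whose i-th
   row is e_i - e_(i-1); it has determinant 1.  Second differences of |i - j|
   vanish off the diagonal, so D A D^T is diagonal, while D D^T is a bordered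
   tridiagonal matrix.  Hence D (A - X I) D^T is a tridiagonal matrix with
   diagonal -(2X + 1) and off-diagonal X, bordered by a corner and two border
   entries (Sections Bordered, DifferenceCongruence).  Expanding along the
   border expresses C_k through the tridiagonal determinants t_n, which satisfy
   t_(n+2) = -(2X + 1) t_(n+1) - X^2 t_n; this is the recurrence (up to sign)
   of U_n = sum_j C(n + j, 2j + 1) X^(n-j-1) (Section BinomialPolynomials).
   Finally the weighted binomial sum of the theorem is rewritten through
   U_k and U_(k-1) using Pascal's rule and absorption (Section WeightedSum). *)

Lemma natr_eq_sub (K : pzRingType) (a b c d : nat) :
  (a + b = c + d)%N -> a%:R = c%:R + d%:R - b%:R :> K.
Proof. by move=> E; apply/eqP; rewrite eq_sym subr_eq -!natrD E addnC. Qed.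

Definition dist (i j : nat) : nat := (i - j + (j - i))%N.

Lemma norm_natrB (R : numDomainType) (i j : nat) : `|(i%:R : R) - j%:R| = (dist i j)%:R.
Proof.
rewrite /dist; case: (leqP i j) => h.
  have -> : (i - j = 0)%N by lia.
  by rewrite add0n natrB // distrC ger0_norm // subr_ge0 ler_nat.
have -> : (j - i = 0)%N by lia.
by rewrite addn0 natrB ?ger0_norm // ?subr_ge0 ?ler_nat //; lia.
Qed.

Section Expansion.
Variable K : comNzRingType.

Lemma expand_det_row_on n (M : 'M[K]_n) i (s : seq 'I_n) :
  uniq s -> (forall j, j \notin s -> M i j = 0) ->
  \det M = \sum_(j <- s) M i j * cofactor M i j.
Proof.
move=> uniq_s M0; rewrite (expand_det_row _ i) (bigID (mem s)) /= big_uniq //.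
by rewrite [X in _ + X]big1 ?addr0 // => j /M0 ->; rewrite mul0r.
Qed.

Lemma expand_det_col_on n (M : 'M[K]_n) j (s : seq 'I_n) :
  uniq s -> (forall i, i \notin s -> M i j = 0) ->
  \det M = \sum_(i <- s) M i j * cofactor M i j.
Proof.
move=> uniq_s M0; rewrite (expand_det_col _ j) (bigID (mem s)) /= big_uniq //.
by rewrite [X in _ + X]big1 ?addr0 // => i /M0 ->; rewrite mul0r.
Qed.

Lemma det_mx22 (M : 'M[K]_2) : \det M = M 0 0 * M 1 1 - M 0 1 * M 1 0.
Proof.
have [w0 l0 l1 m1] : [/\ widen_ord (leqnSn 1) ord_max = 0 :> 'I_2,
  lift ord_max (0 : 'I_1) = 0, lift 0 (0 : 'I_1) = 1 & ord_max = 1 :> 'I_2].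
  by split; apply: val_inj.
rewrite (expand_det_row _ 0) !big_ord_recr big_ord0 /= add0r /cofactor !det_mx11 !mxE.
by rewrite w0 l0 l1 m1 expr0 expr1; ring.
Qed.

End Expansion.

Section Tridiagonal.
Variables (K : comNzRingType) (a b : K).

Definition tri (i j : nat) : K :=
  if i == j then a else if (i == j.+1) || (j == i.+1) then b else 0.

Fixpoint tridet (n : nat) : K :=
  if n is n1.+1 then (if n1 is n2.+1 then a * tridet n1 - b ^+ 2 * tridet n2 else a)
  else 1.

(* The pattern is invariant under the diagonal shift, so minors of
   tridiagonal matrices are again tridiagonal. *)
Lemma tri_shift i j : tri i.+1 j.+1 = tri i j.
Proof. by rewrite /tri !eqSS. Qed.

(* Any n x n matrix with entries [tri i j] has determinant [tridet n]:
   expand along the first row, then the (0,1) minor along its first column. *)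
Lemma det_tri n (M : 'M[K]_n) : (forall i j : 'I_n, M i j = tri i j) ->
  \det M = tridet n.
Proof.
elim/ltn_ind: n M => -[|[|n]] IH M ME; first by rewrite det_mx00.
  by rewrite det_mx11 ME.
have i1lt : (1 < n.+2)%N by []; pose i1 := Ordinal i1lt.
rewrite (@expand_det_row_on _ _ _ ord0 [:: ord0; i1]) //; last first.
  by move=> -[[|[|j]] ?] //; rewrite ME.
rewrite !big_cons big_nil addr0 !ME.
have minor00 : cofactor M ord0 ord0 = tridet n.+1.
  rewrite /cofactor expr0 mul1r; apply: IH => // i j.
  by rewrite !mxE ME !lift0 tri_shift.
have minor01 : cofactor M ord0 i1 = - (b * tridet n).
  rewrite /cofactor expr1 mulN1r; congr (- _).
  rewrite (@expand_det_col_on _ _ _ ord0 [:: ord0]) //; last first.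
    by move=> -[[|i] ?] //; rewrite !mxE ME lift0.
  rewrite big_cons big_nil addr0 !mxE ME lift0.
  rewrite /cofactor expr0 mul1r; congr (_ * _); apply: IH => // i j.
  by rewrite !mxE ME !lift0 /= /bump /= !add1n !tri_shift.
rewrite minor00 minor01 /tri /=; ring.
Qed.

(* Shifting the tridiagonal pattern by one column (resp. row) gives a
   triangular matrix with [b] on its diagonal. *)
Lemma det_tri_shiftl n (M : 'M[K]_n) : (forall i j : 'I_n, M i j = tri i j.+1) ->
  \det M = b ^+ n.
Proof.
move=> ME; rewrite det_trig.
  rewrite (eq_bigr (fun=> b)) ?prodr_const ?card_ord // => i _.
  by rewrite ME /tri ltn_eqF // eqxx orbT.
by apply/is_trig_mxP => i j lt_ij; rewrite ME /tri !ifF //; lia.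
Qed.

Lemma det_tri_shiftu n (M : 'M[K]_n) : (forall i j : 'I_n, M i j = tri i.+1 j) ->
  \det M = b ^+ n.
Proof.
move=> ME; rewrite -det_tr; apply: det_tri_shiftl => i j.
by rewrite mxE ME /tri eq_sym [_ || _]orbC.
Qed.

End Tridiagonal.

Section Bordered.
Variables (K : comNzRingType) (a b : K).

Definition edge (m i : nat) : K := (i == 0%N)%:R - (i == m.+1)%:R.

Lemma edge0 m i : i != 0%N -> i != m.+1 -> edge m i = 0.
Proof. by rewrite /edge => /negbTE-> /negbTE->; rewrite subr0. Qed.

Definition bordered_entry (m : nat) (z h : K) (i j : nat) : K :=
  match i, j with
  | 0, 0 => z
  | 0, j.+1 => h * edge m j
  | i.+1, 0 => h * edge m i
  | i.+1, j.+1 => tri a b i j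
  end.

Definition bordered m z h : 'M[K]_(m.+3) := \matrix_(i, j) bordered_entry m z h i j.

Lemma det_edge_col m h (N : 'M[K]_m.+2) : (forall i, N i ord0 = h * edge m i) ->
  \det N = h * cofactor N ord0 ord0 - h * cofactor N ord_max ord0.
Proof.
move=> NE; rewrite (@expand_det_col_on _ _ _ ord0 [:: ord0; ord_max]) //.
  by rewrite !big_cons big_nil addr0 !NE /edge /= eqxx /=; ring.
by move=> i; rewrite !inE NE -!val_eqE => /norP[i0 imax]; rewrite edge0 ?mulr0.
Qed.

(* Expanding along the first row, whose nonzero entries sit in columns 0, 1
   and m+2: the cofactors are tridiagonal or triangular determinants. *)
Lemma det_bordered m z h : \det (bordered m z h) =
  z * tridet a b m.+2 - h ^+ 2 *+ 2 * (tridet a b m.+1 + (-1) ^+ m * b ^+ m.+1).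
Proof.
have i1lt : (1 < m.+3)%N by []; pose i1 := Ordinal i1lt.
have lt_max (i : 'I_m.+1) : (m < i)%N = false by rewrite ltnNge -ltnS ltn_ord.
have minor00 : cofactor (bordered m z h) ord0 ord0 = tridet a b m.+2.
  by rewrite /cofactor expr0 mul1r; apply: det_tri => i j; rewrite !mxE !lift0.
have minor01 : cofactor (bordered m z h) ord0 i1 =
    - (h * tridet a b m.+1 - h * ((-1) ^+ m.+1 * b ^+ m.+1)).
  rewrite /cofactor expr1 mulN1r (@det_edge_col _ h); last by move=> i; rewrite !mxE !lift0.
  congr (- (h * _ - h * _)); rewrite /cofactor ?expr0 ?mul1r.
    by apply: det_tri => i j; rewrite !mxE /= /bump /= !add1n tri_shift.
  rewrite /= addn0; congr (_ * _); apply: det_tri_shiftl => i j.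
  by rewrite !mxE /= /bump /= lt_max add0n !add1n.
have minor02 : cofactor (bordered m z h) ord0 ord_max =
    (-1) ^+ m.+2 * (h * b ^+ m.+1 - h * ((-1) ^+ m.+1 * tridet a b m.+1)).
  rewrite /cofactor /= add0n (@det_edge_col _ h); last first.
    by move=> i; rewrite !mxE lift0 lift_max.
  congr (_ * (h * _ - h * _)); rewrite /cofactor ?expr0 ?mul1r.
    apply: det_tri_shiftu => i j.
    by rewrite !mxE /= /bump /= !add1n ltnS lt_max add0n.
  rewrite /= addn0; congr (_ * _); apply: det_tri => i j.
  by rewrite !mxE /= /bump /= lt_max !add1n ltnS lt_max !add0n.
rewrite (@expand_det_row_on _ _ _ ord0 [:: ord0; i1; ord_max]) //; last first.
  move=> -[[|j] lt_j]; rewrite !inE mxE -!val_eqE //= => /norP[j1 jmax].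
  by rewrite edge0 ?mulr0.
rewrite !big_cons big_nil addr0 minor00 minor01 minor02.
move: (tridet a b m.+2) (tridet a b m.+1) => t2 t1.
rewrite !mxE /= /edge /= eqxx /= !exprS -signr_odd.
by case: odd; rewrite ?expr0 ?expr1; ring.
Qed.

End Bordered.

Lemma tri_morph (K L : comNzRingType) (f : {rmorphism K -> L}) a b i j :
  f (tri a b i j) = tri (f a) (f b) i j.
Proof. by rewrite /tri; case: ifP => _; [|case: ifP => _]; rewrite ?rmorph0. Qed.

Lemma map_bordered (K L : comNzRingType) (f : {rmorphism K -> L}) a b m z h :
  map_mx f (bordered a b m z h) = bordered (f a) (f b) m (f z) (f h).
Proof.
apply/matrixP => i j; rewrite !mxE.
case: (i : nat) (j : nat) => [|i'] [|j'] //=; rewrite ?tri_morph // rmorphM /edge;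
  by rewrite rmorphB !rmorph_nat.
Qed.

Lemma bordered_sub_scale (K : comNzRingType) (c a b z h a' b' z' h' : K) m :
  bordered a b m z h - c *: bordered a' b' m z' h' =
  bordered (a - c * a') (b - c * b') m (z - c * z') (h - c * h').
Proof.
apply/matrixP => i j; rewrite !mxE.
case: (i : nat) (j : nat) => [|i'] [|j'] /=; rewrite ?mulrBl ?mulrA //.
by rewrite /tri; case: ifP => _; [|case: ifP => _]; rewrite ?mulr0 ?subr0.
Qed.

Section TwoTermCongruence.
Variables (K : comNzRingType) (n : nat) (al be : 'I_n -> K) (q : 'I_n -> 'I_n).

Lemma sum_indicator (i : 'I_n) (F : 'I_n -> K) : \sum_j (j == i)%:R * F j = F i.
Proof.
by rewrite (bigD1 i) //= eqxx mul1r big1 ?addr0 // => j /negbTE->; rewrite mul0r.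
Qed.

Definition two_term : 'M[K]_n :=
  \matrix_(i, c) (al i * (c == i)%:R + be i * (c == q i)%:R).

Lemma two_term_mul_row i (F : 'I_n -> K) :
  \sum_c two_term i c * F c = al i * F i + be i * F (q i).
Proof.
rewrite -(sum_indicator i (fun c => al i * F c)) -(sum_indicator (q i) (fun c => be i * F c)).
by rewrite -big_split; apply: eq_bigr => c _; rewrite mxE /=; ring.
Qed.

Lemma two_term_congr (X : 'M[K]_n) i j :
  (two_term *m X *m two_term^T) i j = al i * al j * X i j + al i * be j * X i (q j)
     + be i * al j * X (q i) j + be i * be j * X (q i) (q j).
Proof.
rewrite mxE (eq_bigr (fun c => two_term j c * (al i * X i c + be i * X (q i) c))).
  by rewrite two_term_mul_row; ring.
move=> c _; rewrite !mxE mulrC; congr (_ * _).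
by rewrite -(two_term_mul_row i (fun d => X d c)); apply: eq_bigr => d _; rewrite mxE.
Qed.

End TwoTermCongruence.

Section BinomialPolynomials.
Variable R : comNzRingType.
Local Notation P := {poly R}.

Definition binc (n j : nat) : R := 'C(n + j, 2 * j + 1)%:R.

Definition U (n : nat) : P := \sum_(0 <= j < n) binc n j *: 'X^(n - j - 1).

Lemma binc_small n j : (n <= j)%N -> binc n j = 0.
Proof. by move=> le_nj; rewrite /binc bin_small //; lia. Qed.

Lemma binc0 n : binc n 0 = n%:R.
Proof. by rewrite /binc addn0 muln0 bin1. Qed.

Lemma U0 : U 0 = 0. Proof. by rewrite /U big_geq. Qed.

Lemma U1 : U 1 = 1. Proof. by rewrite /U big_nat1 binc0 scale1r expr0. Qed.

Lemma mulX_U n : 'X * U n.+1 =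
  (n.+1)%:R *: 'X^(n.+1) + \sum_(0 <= j < n.+1) binc n.+1 j.+1 *: 'X^(n - j).
Proof.
rewrite /U mulr_sumr big_nat_recl // -scalerAr -exprS binc0 subn0 subn1 /=.
congr (_ + _); rewrite big_nat_recr //= binc_small // scale0r addr0.
by apply: eq_big_nat => j /andP[_ lt_j]; rewrite -scalerAr -exprS; congr (_ *: 'X^_); lia.
Qed.

Lemma mulX2_U n : 'X^2 * U n.+1 =
  (n.+1)%:R *: 'X^(n.+2) + \sum_(0 <= j < n.+2) binc n.+1 j.+1 *: 'X^(n.+1 - j).
Proof.
rewrite /U mulr_sumr big_nat_recl // -scalerAr -exprD binc0 subn0 subn1 /= add2n.
congr (_ + _); rewrite !big_nat_recr //= !binc_small // !scale0r !addr0.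
by apply: eq_big_nat => j /andP[_ lt_j]; rewrite -scalerAr -exprD; congr (_ *: 'X^_); lia.
Qed.

(* Pascal's rule yields the three-term recurrence of the U_n. *)
Lemma U_rec n : U n.+2 = ('X *+ 2 + 1) * U n.+1 - 'X^2 * U n.
Proof.
rewrite mulrDl mul1r mulrnAl.
have XU : 'X * U n.+1 = \sum_(0 <= j < n.+2) binc n.+1 j *: 'X^(n.+1 - j).
  rewrite big_nat_recr //= binc_small // scale0r addr0 /U mulr_sumr.
  by apply: eq_big_nat => j /andP[_ lt_j]; rewrite -scalerAr -exprS; congr (_ *: 'X^_); lia.
have U_shift : U n.+1 =
    \sum_(0 <= j < n.+2) (if j is j'.+1 then binc n.+1 j' else 0) *: 'X^(n.+1 - j).
  rewrite big_nat_recl //= scale0r add0r /U.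
  by apply: eq_big_nat => j /andP[_ lt_j]; congr (_ *: 'X^_); lia.
have X2U : 'X^2 * U n = \sum_(0 <= j < n.+2) binc n j *: 'X^(n.+1 - j).
  rewrite !big_nat_recr //= !binc_small // !scale0r !addr0 /U mulr_sumr.
  by apply: eq_big_nat => j /andP[_ lt_j]; rewrite -scalerAr -exprD; congr (_ *: 'X^_); lia.
rewrite XU U_shift X2U -sumrMnl -!big_split -sumrB /U /=.
apply: eq_big_nat => j /andP[_ lt_j].
have -> : (n.+2 - j - 1 = n.+1 - j)%N by lia.
rewrite scalerMnl -scalerDl -scalerBl; congr (_ *: _); rewrite /binc -mulrnA.
case: j lt_j => [|j] lt_j.
  by rewrite !addn0 !muln0 !bin1 -[0 : R]/(0%:R); apply: natr_eq_sub; lia.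
by apply: natr_eq_sub; rewrite !mulnS !addSn !addnS !binS; lia.
Qed.

Lemma tridet_U n : tridet (- ('X *+ 2 + 1)) 'X n = (-1) ^+ n * U n.+1 :> P.
Proof.
elim/ltn_ind: n => -[|[|n]] IH; first by rewrite U1 expr0 mulr1.
  by rewrite /= U_rec U1 U0 mulr0 subr0 mulr1 expr1 mulN1r.
rewrite [tridet _ _ _]/= -/(tridet _ _ n.+1) !IH // [U n.+3]U_rec [U n.+2]U_rec !exprS.
ring.
Qed.

End BinomialPolynomials.

Lemma bin_absorb a j : (j <= a)%N ->
  ((2 * j + 2) * 'C(a + j.+1, 2 * j + 2) = (a - j) * 'C(a + j.+1, 2 * j + 1))%N.
Proof.
move=> le_ja; have -> : (2 * j + 2 = (2 * j + 1).+1)%N by lia.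
rewrite -mul_bin_diag mul_bin_down; congr (_ * _); lia.
Qed.

Section WeightedSum.
Variable R : numFieldType.
Local Notation P := {poly R}.

(* Coefficientwise form of [weighted_sum_U]: the weight j / (j+1) is traded
   for neighbouring binomial coefficients (Pascal's rule and absorption). *)
Lemma weighted_binc n j : (j < n.+2)%N ->
  (n.+2)%:R / 4 * (j%:R / (j.+1)%:R * 'C(n.+2 + j, 2 * j + 1)%:R) =
  (n.+1)%:R / 4 * binc R n.+2 j - 2^-1 * binc R n.+2 j.+1 + 2^-1 * binc R n.+1 j.+1.
Proof.
move=> lt_j; rewrite /binc.
have -> : (n.+2 + j.+1 = (n.+1 + j.+1).+1)%N by lia.
have -> : (2 * j.+1 + 1 = (2 * j + 2).+1)%N by lia.
have -> : (n.+2 + j = n.+1 + j.+1)%N by lia.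
rewrite binS natrD.
have absorb : (2 * j + 2)%:R * 'C(n.+1 + j.+1, 2 * j + 2)%:R =
    ((n.+1)%:R - j%:R) * 'C(n.+1 + j.+1, 2 * j + 1)%:R :> R.
  by rewrite -natrB // -!natrM bin_absorb.
set C1 : R := 'C(n.+1 + j.+1, 2 * j + 1)%:R; set C2 : R := 'C(n.+1 + j.+1, 2 * j + 2)%:R.
have nz (i : nat) : (i.+1)%:R != 0 :> R by rewrite pnatr_eq0.
have C2E : C2 = ((n.+1)%:R - j%:R) * C1 / (2 * j + 2)%:R.
  by rewrite -absorb mulrC mulrA mulVf ?mul1r // addn2 nz.
rewrite C2E natrD natrM -[(j.+1)%:R]natr1 -[(n.+2)%:R]natr1.
have nz1 : j%:R + 1 != 0 :> R by rewrite natr1 nz.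
have nz2 : 2 * j%:R + 2 != 0 :> R by rewrite -natrM -natrD addn2 nz.
by field; rewrite nz1 nz2.
Qed.

Lemma weighted_sum_U n :
  ((n.+2)%:R / 4 : R) *: \sum_(1 <= j < n.+2)
      ((j%:R / (j.+1)%:R : R) * 'C(n.+2 + j, 2 * j + 1)%:R) *: 'X^(n.+2 - j - 1) =
  ((n.+1)%:R / 4) *: U R n.+2 - 2^-1 *: ('X * U R n.+2)
    + 2^-1 *: ('X^2 * U R n.+1) + 2^-1 *: 'X^(n.+2).
Proof.
have from0 (F : nat -> P) :
    F 0%N = 0 -> \sum_(1 <= j < n.+2) F j = \sum_(0 <= j < n.+2) F j.
  by move=> F0; rewrite [RHS]big_ltn // F0 add0r.
rewrite from0 ?mul0r ?scale0r // scaler_sumr.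
rewrite (eq_big_nat _ _ (F2 := fun j => (n.+1)%:R / 4 *: (binc R n.+2 j *: 'X^(n.+2 - j - 1))
    - 2^-1 *: (binc R n.+2 j.+1 *: 'X^(n.+1 - j))
    + 2^-1 *: (binc R n.+1 j.+1 *: 'X^(n.+1 - j)))); last first.
  move=> j /andP[_ lt_j]; have -> : (n.+2 - j - 1 = n.+1 - j)%N by lia.
  by rewrite !scalerA -scalerBl -scalerDl weighted_binc.
rewrite big_split sumrB /= -!scaler_sumr -/(U R n.+2).
rewrite mulX_U mulX2_U !scalerDr !scalerA -[(n.+2)%:R]natr1 mulrDr mulr1 scalerDl.
by move: (_ *: 'X^(n.+2)) (2^-1 *: 'X^(n.+2)) => Y Z; ring.
Qed.

End WeightedSum.

Section DifferenceCongruence.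
Variables (R : numFieldType) (m : nat).
Local Notation k := m.+3.
Local Notation P := {poly R}.

Definition cyc_pred (i : 'I_k) : 'I_k := if (i : nat) == 0%N then ord_max else inord i.-1.

Lemma cyc_pred_val (i : 'I_k) :
  (cyc_pred i : nat) = if (i : nat) == 0%N then m.+2 else i.-1.
Proof. rewrite /cyc_pred; case: eqP => //= _; rewrite inordK //; case: i => /= i; lia. Qed.

(* The difference matrix: its first row is (e_0 + e_(k-1)) / 2 and its i-th
   row is e_i - e_(i-1) for i >= 1. *)
Definition diff_coef (first other : R) (i : 'I_k) : R :=
  if (i : nat) == 0%N then first else other.

Definition diffmx : 'M[R]_k := two_term (diff_coef 2^-1 1) (diff_coef 2^-1 (-1)) cyc_pred.

Lemma diffmxE (i c : 'I_k) : diffmx i c =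
  diff_coef 2^-1 1 i * ((c : nat) == i)%:R
  + diff_coef 2^-1 (-1) i * ((c : nat) == if (i : nat) == 0%N then m.+2 else i.-1)%:R.
Proof. by rewrite mxE -cyc_pred_val. Qed.

(* Expanding along the first row: the two cofactors are triangular with
   diagonals 1 and -1 respectively. *)
Lemma det_diffmx : \det diffmx = 1.
Proof.
rewrite (@expand_det_row_on _ _ _ ord0 [:: ord0; ord_max]) //; last first.
  move=> j; rewrite !inE -!val_eqE diffmxE /= => /norP[/negbTE-> /negbTE->].
  by rewrite !mulr0 addr0.
rewrite !big_cons big_nil addr0 !diffmxE /diff_coef /= eqxx.
have minor0 : cofactor diffmx ord0 ord0 = 1.
  rewrite /cofactor expr0 mul1r det_trig.
    apply: big1 => i _; rewrite 2!mxE diffmxE !lift0 /diff_coef /= eqxx.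
    by rewrite (@gtn_eqF i i.+1) // mulr1 mulr0 addr0.
  apply/is_trig_mxP => i j lt_ij; rewrite 2!mxE diffmxE !lift0 /=.
  have [-> ->] : (j.+1 == i.+1) = false /\ (j.+1 == i :> nat) = false.
    by split; apply/eqP; lia.
  by rewrite !mulr0 addr0.
have minor_max : cofactor diffmx ord0 ord_max = (-1) ^+ m.+2 * (-1) ^+ m.+2.
  rewrite /cofactor /= -det_tr det_trig.
    congr (_ * _); rewrite -[RHS](prodr_const_nat 0 m.+2) big_mkord.
    apply: eq_bigr => i _; rewrite 3!mxE diffmxE lift0 lift_max /diff_coef /= eqxx.
    by rewrite (@ltn_eqF i i.+1) // mulr0 add0r mulr1.
  apply/is_trig_mxP => i j lt_ij; rewrite 3!mxE diffmxE lift0 lift_max /=.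
  have [-> ->] : (i == j.+1 :> nat) = false /\ (i == j :> nat) = false.
    by split; apply/eqP; lia.
  by rewrite !mulr0 addr0.
by rewrite minor0 minor_max -expr2 sqrr_sign /= ?mulr1n; field.
Qed.

(* Second differences of |i - j| / 2 vanish off the diagonal, and the
   wrap-around first row kills the border: D A D^T is diagonal. *)
Lemma diffmx_distance : diffmx *m A_mat R k *m diffmx^T =
  bordered (-1) 0 m ((m.+2)%:R / 4) 0.
Proof.
apply/matrixP => i j; rewrite two_term_congr !mxE !norm_natrB !cyc_pred_val /diff_coef.
case: i => -[|i] lt_i; case: j => -[|j] lt_j /=.
- by rewrite /dist !subn0 !sub0n !subnn !addn0 add0n; field.
- have E : (dist 0 j.+1 + dist m.+2 j.+1 = dist 0 j + dist m.+2 j)%N.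
    by rewrite /dist; lia.
  by rewrite (natr_eq_sub _ E) mul0r; field.
- have E : (dist i.+1 0 + dist i.+1 m.+2 = dist i 0 + dist i m.+2)%N.
    by rewrite /dist; lia.
  by rewrite (natr_eq_sub _ E) mul0r; field.
- have E : (dist i.+1 j + dist i j.+1 = dist i j + dist i j + (i == j) * 2)%N.
    by rewrite /dist; case: eqP; lia.
  have -> : dist i.+1 j.+1 = dist i j by rewrite /dist !subSS.
  rewrite (natr_eq_sub _ E) natrD natrM /tri if_same.
  by case: eqP => _ /=; field.
Qed.

Lemma diffmx_gram : diffmx *m diffmx^T = bordered 2 (-1) m 2^-1 (- 2^-1).
Proof.
apply/matrixP => i j; rewrite -{1}[diffmx]mulmx1 two_term_congr !mxE -!val_eqE /=.
rewrite !cyc_pred_val /diff_coef.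
case: i => -[|i] lt_i; case: j => -[|j] lt_j /=.
- by rewrite eqxx /= ?mulr1n ?mulr0n; field.
- by rewrite (@gtn_eqF j m.+2) // eqSS /edge !(eq_sym _ j) /= ?mulr0n; field.
- by rewrite (@ltn_eqF i m.+2) // eqSS /edge /= ?mulr0n; field.
- rewrite eqSS /tri (eq_sym i.+1 j).
  case: (ltngtP i j) => [lt_ij | gt_ij | <-]; rewrite ?eqxx.
  + rewrite (@ltn_eqF i j.+1); last lia.
    by case: (j == i.+1) => /=; rewrite ?mulr0n ?mulr1n; field.
  + rewrite (@ltn_eqF j i.+1); last lia.
    by case: (i == j.+1) => /=; rewrite ?mulr0n ?mulr1n; field.
  + by rewrite ltn_eqF //= ?mulr0n ?mulr1n; field.
Qed.

(* The congruence by the constant matrix D turns A - X I into a bordered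
   tridiagonal matrix, without changing the determinant. *)
Lemma char_poly_bordered : C_poly R k =
  \det (bordered (- ('X *+ 2 + 1)) 'X m (((m.+2)%:R / 4)%:P - 2^-1 *: 'X) (2^-1 *: 'X)).
Proof.
pose D : 'M[P]_k := map_mx polyC diffmx.
have detD : \det D = 1 by rewrite det_map_mx det_diffmx.
have -> : C_poly R k = \det (D *m (map_mx polyC (A_mat R k) - 'X%:M) *m D^T).
  by rewrite !det_mulmx det_tr detD mul1r mulr1.
rewrite mulmxBr mulmxBl mul_mx_scalar -scalemxAl /D map_trmx -!map_mxM.
rewrite diffmx_distance diffmx_gram !map_bordered bordered_sub_scale.
congr (\det (bordered _ _ _ _ _)) => /=.
- by rewrite polyCN polyC1 polyC_natr mulr_natr; ring.
- by rewrite polyC0 polyCN polyC1 mulrN1 sub0r opprK.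
- by rewrite -mul_polyC [_ * 'X]mulrC.
- by rewrite polyC0 polyCN mulrN sub0r opprK -mul_polyC [_ * 'X]mulrC.
Qed.

End DifferenceCongruence.

Section ClosedForm.
Variable R : numFieldType.
Local Notation P := {poly R}.

Lemma closed_form_from_U m (U3 U2 : P) :
  (((m.+2)%:R / 4)%:P - 2^-1 *: 'X) * ((-1) ^+ m.+2 * U3)
    - (2^-1 *: 'X) ^+ 2 *+ 2 * ((-1) ^+ m.+1 * U2 + (-1) ^+ m * 'X ^+ m.+1) =
  (-1) ^+ m.+3 * ('X^(m.+3) - (((m.+2)%:R / 4) *: U3 - 2^-1 *: ('X * U3)
     + 2^-1 *: ('X^2 * U2) + 2^-1 *: 'X^(m.+3))).
Proof.
rewrite -!mul_polyC; set t := (2^-1)%:P.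
have halves : t + t = 1 by rewrite -polyCD -polyC1; congr polyC; field.
have quarter : t * t *+ 2 = t by rewrite -mulrnAr mulr2n halves mulr1.
have split : 'X^(m.+3) = t * 'X^(m.+3) + t * 'X^(m.+3) :> P.
  by rewrite -mulrDl halves mul1r.
by rewrite exprMn -mulrnAl expr2 quarter {1}split !exprS; ring.
Qed.

Lemma C_poly1 : C_poly R 1 = - 'X.
Proof. by rewrite /C_poly det_mx11 !mxE /= subrr normr0 mul0r polyC0 sub0r. Qed.

Lemma C_poly2 : C_poly R 2 = 'X^2 - (4^-1)%:P.
Proof.
rewrite /C_poly det_mx22 !mxE /= !norm_natrB /dist (_ : (1 %% 2 = 1)%N) //=.
rewrite !subnn !subn0 !sub0n !mul0r !polyC0 !sub0r !mulr1n !mulr0n !subr0.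
rewrite -polyCM mulrNN -expr2; congr (_ - _%:P).
by field.
Qed.

End ClosedForm.

Theorem theorem2p2 (R : numFieldType) (k : nat) (hk : (1 <= k)%N) :
  C_poly R k =
  (-1) ^+ k * ('X^k - (k%:R / 4 : R) *:
     \sum_(1 <= j < k) ((j%:R / (j.+1)%:R : R) * 'C(k + j, 2 * j + 1)%:R)
                         *: 'X^(k - j - 1)).
Proof.
case: k hk => [//|[|[|m]]] _.
- by rewrite C_poly1 big_geq // scaler0 subr0 expr1 mulN1r.
- rewrite C_poly2 big_nat1 (_ : 'C(2 + 1, 2 * 1 + 1) = 1%N) // expr0 sqrrN expr1n mul1r.
  rewrite scalerA -mul_polyC mulr1; congr (_ - _%:P).
  by field.
rewrite char_poly_bordered det_bordered !tridet_U weighted_sum_U.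
exact: closed_form_from_U.
Qed.
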